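(* Let $\mathcal{X}\subseteq\mathbb{R}^m$ be countable and let $\widehat\nu = \sum_{j=1}^N\widehat\nu_j\delta_{\widehat x_j}$ be a probability mass function supported on $N$ distinct points $\widehat x_1,\dots,\widehat x_N\in\mathcal{X}$ with $\widehat\nu_j>0$ and $\sum_j\widehat\nu_j = 1$. Let $f:\mathbb{R}\to\mathbb{R}$ be convex with $f(1)=0$, and for $\varepsilon\ge0$ let $\mathbb{B}_f(\widehat\nu,\varepsilon) = \{\nu\in\mathcal{M}(\mathcal{X}) : D_f(\widehat\nu\parallel\nu)\le\varepsilon\}$. Then for any $\varepsilon\ge0$ and $x\in\mathcal{X}$ there exists $\nu^\star_f\in\mathbb{B}_f(\widehat\nu,\varepsilon)$ with $\sup_{\nu\in\mathbb{B}_f(\widehat\nu,\varepsilon)}\nu(x) = \nu^\star_f(x)$. Moreover, $\nu^\star_f$ is supported on at most $N+1$ points and $\mathrm{supp}(\nu^\star_f)\subseteq\mathrm{supp}(\widehat\nu)\cup\{x\}$.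
   Context: $\mathcal{M}(\mathcal{X})$ is the set of probability mass functions on $\mathcal{X}$. The $f$-divergence between $\nu_1,\nu_2\in\mathcal{M}(\mathcal{X})$ is $D_f(\nu_1\parallel\nu_2) = \sum_{z\in\mathcal{X}} f(\nu_1(z)/\nu_2(z))\,\nu_2(z)$. *)

From HB Require Import structures.
From mathcomp Require Import all_boot all_order all_algebra.
From mathcomp Require Import all_classical all_reals all_analysis.
Set Implicit Arguments. Unset Strict Implicit. Unset Printing Implicit Defensive.
Import Order.TTheory GRing.Theory Num.Theory.
Import numFieldNormedType.Exports.
Local Open Scope classical_set_scope.
Local Open Scope ring_scope.

Definition convex_fun (R : realType) (f : R -> R) : Prop :=
  forall (x y t : R), 0 <= t -> t <= 1 ->
    f (t * x + (1 - t) * y) <= t * f x + (1 - t) * f y.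

Definition is_pmf (R : realType) (m : nat) (X : set 'rV[R]_m)
  (nu : 'rV[R]_m -> R) : Prop :=
  (forall z, 0 <= nu z) /\ (forall z, ~ X z -> nu z = 0) /\
  (\esum_(z in X) (nu z)%:E = 1%E).

(* Recession slope f'(oo) = lim_{t -> +oo} f(t)/t, in the extended reals. *)
Definition f_infty (R : realType) (f : R -> R) : \bar R :=
  lim ((f t / t)%:E @[t --> +oo]).

(* Perspective term  b * f(a/b)  with the standard conventions
   0 * f(0/0) = 0  and  0 * f(a/0) = a * f'(oo)  for a > 0. *)
Definition fterm (R : realType) (f : R -> R) (a b : R) : \bar R :=
  if 0 < b then (b * f (a / b))%:E
  else if a == 0 then 0%E else (a%:E * f_infty f)%E.

(* D_f(nu1 || nu2) = sum_{z in X} f(nu1 z / nu2 z) nu2 z, the (possibly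
   signed) series being the sum of the positive parts minus the sum of the
   negative parts. *)
Definition fdiv (R : realType) (m : nat) (X : set 'rV[R]_m) (f : R -> R)
  (nu1 nu2 : 'rV[R]_m -> R) : \bar R :=
  (\esum_(z in X) maxe (fterm f (nu1 z) (nu2 z)) 0
   - \esum_(z in X) maxe (- fterm f (nu1 z) (nu2 z)) 0)%E.

Definition fball (R : realType) (m : nat) (X : set 'rV[R]_m) (f : R -> R)
  (nuhat : 'rV[R]_m -> R) (eps : R) : set ('rV[R]_m -> R) :=
  [set nu | is_pmf X nu /\ (fdiv X f nuhat nu <= eps%:E)%E].

Definition empirical (R : realType) (m N : nat) (xhat : 'I_N -> 'rV[R]_m)
  (w : 'I_N -> R) : 'rV[R]_m -> R :=
  fun z => \sum_(j < N | xhat j == z) w j.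

(* The supremum is attained on the segment of mixtures
   l * nuhat + (1 - l) * delta_x, 0 <= l <= 1, all supported on
   supp(nuhat) and x.  If nu is in the ball and nu x >= nuhat x, the mixture
   with the same mass at x is no farther from nuhat: off x it is proportional
   to nuhat, and by Jensen's inequality for the perspective
   (p, q) |-> q f(p / q) proportional masses minimise the divergence of the
   part off x.  The divergence of the mixtures is convex in l on (0, 1], so
   its sublevel sets are closed from the right at interior points; at l = 0
   the divergence f(nuhat x) + (1 - nuhat x) f'(oo) is bounded by the values
   for l > 0 through the definition of the recession slope f'(oo). *)

From HB Require Import structures.
From mathcomp Require Import all_boot all_order all_algebra.
From mathcomp Require Import all_classical all_reals all_analysis.
From mathcomp Require Import ring lra.
Set Implicit Arguments. Unset Strict Implicit. Unset Printing Implicit Defensive.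
Import Order.TTheory GRing.Theory Num.Theory.
Import numFieldNormedType.Exports.
Local Open Scope classical_set_scope.
Local Open Scope ring_scope.

Lemma invr_cvg0 (R : realType) : (fun t : R => t^-1) @ +oo --> (0 : R).
Proof.
apply/gtr0_cvgV0; last exact: cvg_id.
by near=> t; near: t; exact: nbhs_pinfty_gt.
Unshelve. all: by end_near.
Qed.

Definition perspective (R : realType) (f : R -> R) (p q : R) : R := q * f (p / q).

Lemma perspective_scale (R : realType) (f : R -> R) p l :
  perspective f p (l * p) = p * perspective f 1 l.
Proof.
rewrite /perspective; have [->|p0] := eqVneq p 0; first by rewrite !(mulr0, mul0r).
have [->|l0] := eqVneq l 0; first by rewrite !(mulr0, mul0r).
by rewrite invfM mulrCA divff // mulr1 div1r; ring.
Qed.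

Section convex_real_function.
Variables (R : realType) (f : R -> R).
Hypothesis f_convex : convex_fun f.

Lemma convex_chord u v y : u < v -> v < y ->
  (y - u) * f v <= (y - v) * f u + (v - u) * f y.
Proof.
move=> uv vy; have yu : 0 < y - u by lra.
pose t := (y - v) / (y - u).
have t0 : 0 <= t by rewrite divr_ge0 //; lra.
have t1 : t <= 1 by rewrite ler_pdivrMr //; lra.
have := ler_wpM2l (ltW yu) (f_convex u y t0 t1).
have -> : t * u + (1 - t) * y = v by rewrite /t; field; lra.
have -> : (y - u) * (t * f u + (1 - t) * f y) = (y - v) * f u + (v - u) * f y.
  by rewrite /t; field; lra.
by [].
Qed.

Lemma convex_slope0_nondecreasing p q : 0 < p -> p <= q ->
  (f p - f 0) / p <= (f q - f 0) / q.
Proof.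
move=> p0; rewrite le_eqVlt => /predU1P[-> //|pq].
have := convex_chord p0 pq.
rewrite ler_pdivrMr // mulrAC ler_pdivlMr; last by lra.
nra.
Qed.

Lemma convex_support_line s : exists k, forall y, f s + k * (y - s) <= f y.
Proof.
pose E := [set (f s - f u) / (s - u) | u in [set u | u < s]].
have E_ne : E !=set0 by exists ((f s - f (s - 1)) / (s - (s - 1))), (s - 1) => //=; lra.
have E_ub : ubound E (f (s + 1) - f s).
  move=> _ [u /= us <-]; rewrite ler_pdivrMr; last by lra.
  have := @convex_chord u s (s + 1) us ltac:(lra); nra.
have E_sup : has_sup E by split; last by exists (f (s + 1) - f s).
exists (sup E) => y; have [ys|sy|->] := ltgtP y s.
- have := sup_upper_bound E_sup (ex_intro2 _ _ y ys erefl).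
  rewrite ler_pdivrMr; last by lra.
  nra.
- have : sup E <= (f y - f s) / (y - s).
    apply: ge_sup => // _ [u /= us <-].
    rewrite ler_pdivrMr; last by lra.
    rewrite mulrAC ler_pdivlMr; last by lra.
    have := convex_chord us sy; nra.
  rewrite ler_pdivlMr; last by lra.
  nra.
- by rewrite subrr mulr0 addr0.
Qed.

(* By convexity the slope (f t - f 0) / t is nondecreasing, and f t / t
   differs from it by the vanishing term f 0 / t. *)
Lemma f_infty_cvg : (f t / t)%:E @[t --> +oo] --> f_infty f.
Proof.
pose slope (r : R) : \bar R := ((f (Num.max r 1) - f 0) / Num.max r 1)%:E.
have slope_nd : {homo slope : r s / r <= s >-> (r <= s)%E}.
  move=> r s rs; rewrite lee_fin; apply: convex_slope0_nondecreasing.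
    by rewrite lt_max ltr01 orbT.
  by rewrite ge_max !le_max rs lexx /= orbT.
suff lim_slope : (f t / t)%:E @[t --> +oo] --> (ereal_sup (range slope) + 0)%E.
  by rewrite /f_infty (cvg_lim _ lim_slope).
have f0_cvg : (f 0 / t)%:E @[t --> +oo] --> (0 : \bar R)%E.
  apply: cvg_EFin; first by near=> t.
  by have := cvgM (cvg_cst (f 0)) (@invr_cvg0 R); rewrite mulr0; apply.
have sum_def : (ereal_sup (range slope) +? 0)%E by rewrite fin_num_adde_defl.
apply: cvg_trans _ (cvgeD sum_def (nondecreasing_cvge slope_nd) f0_cvg).
apply: near_eq_cvg; near=> t.
have t1 : 1 <= t by near: t; apply: nbhs_pinfty_ge.
rewrite /slope /= (max_l t1) -EFinD -mulrDl; congr (_ * _)%:E; lra.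
Unshelve. all: by end_near.
Qed.

Lemma f_infty_ge_slope k K : (forall t, 1 <= t -> k * t + K <= f t) ->
  (k%:E <= f_infty f)%E.
Proof.
move=> minor; apply/lee_subgt0Pr => e e0; apply: (cvge_ge _ f_infty_cvg).
near=> t.
have t1 : 1 <= t by near: t; apply: nbhs_pinfty_ge.
have tK : `|K| / e <= t by near: t; apply: nbhs_pinfty_ge; exact: num_real.
rewrite -EFinB lee_fin ler_pdivlMr; last by lra.
rewrite ler_pdivrMr // in tK.
have := minor t t1; have := ler_norm (- K); rewrite normrN; nra.
Unshelve. all: by end_near.
Qed.

Lemma f_infty_le_slope k K A : (forall t, A <= t -> f t <= k * t + K) ->
  (f_infty f <= k%:E)%E.
Proof.
move=> major; apply/lee_addgt0Pr => e e0; apply: (cvge_le _ f_infty_cvg).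
near=> t.
have t1 : 1 <= t by near: t; apply: nbhs_pinfty_ge.
have tA : A <= t by near: t; apply: nbhs_pinfty_ge; exact: num_real.
have tK : `|K| / e <= t by near: t; apply: nbhs_pinfty_ge; exact: num_real.
rewrite -EFinD lee_fin ler_pdivrMr; last by lra.
rewrite ler_pdivrMr // in tK.
have := major t tA; have := ler_norm K; nra.
Unshelve. all: by end_near.
Qed.

Lemma f_infty_neqNy : f_infty f != -oo%E.
Proof.
have [k supp] := convex_support_line 1.
have : (k%:E <= f_infty f)%E.
  by apply: (@f_infty_ge_slope k (f 1 - k)) => t _; have := supp t; lra.
by case: (f_infty f).
Qed.

Lemma perspective_convex p b1 b2 t : p = 0 \/ 0 < b1 /\ 0 < b2 -> 0 <= t <= 1 ->
  perspective f p (t * b1 + (1 - t) * b2) <=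
  t * perspective f p b1 + (1 - t) * perspective f p b2.
Proof.
rewrite /perspective => -[->|[b10 b20]] /andP[t0 t1]; first by rewrite !mul0r; lra.
have b0 : 0 < t * b1 + (1 - t) * b2 by nra.
pose mu := t * b1 / (t * b1 + (1 - t) * b2).
have mu0 : 0 <= mu by rewrite divr_ge0 //; [nra|exact: ltW].
have mu1 : mu <= 1 by rewrite ler_pdivrMr //; nra.
have := ler_wpM2l (ltW b0) (f_convex (p / b1) (p / b2) mu0 mu1).
have -> : mu * (p / b1) + (1 - mu) * (p / b2) = p / (t * b1 + (1 - t) * b2).
  by rewrite /mu; field; apply/and3P; split; apply/negP => /eqP; lra.
have -> : (t * b1 + (1 - t) * b2) * (mu * f (p / b1) + (1 - mu) * f (p / b2))
   = t * (b1 * f (p / b1)) + (1 - t) * (b2 * f (p / b2)).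
  by rewrite /mu; field; apply/negP => /eqP; lra.
by [].
Qed.

Lemma perspective_extrapolation p b : 0 < b <= 1 ->
  (2 - b) * f p - (1 - b) * perspective f p 2 <= perspective f p b.
Proof.
move=> /andP[b0 b1]; have b2 : 0 < 2 - b by lra.
pose t := (2 - b)^-1.
have t01 : 0 <= t <= 1 by rewrite invr_ge0 ltW //= invf_le1 //; lra.
have := @perspective_convex p b 2 t (or_intror (conj b0 (ltr0Sn _ 1))) t01.
rewrite (_ : t * b + _ = 1); last by rewrite /t; field; lra.
rewrite {1}/perspective divr1 mul1r -(ler_pM2l b2) mulrDr !mulrA.
have e1 : (2 - b) * t = 1 by rewrite /t divff ?gt_eqF.
have e2 : (2 - b) * (1 - t) = 1 - b by rewrite mulrBr mulr1 e1; lra.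
by rewrite e1 e2 /perspective mul1r; lra.
Qed.

Lemma fterm_perspective p q : 0 <= q -> 0 < q \/ p = 0 ->
  fterm f p q = (perspective f p q)%:E.
Proof.
rewrite /fterm /perspective => q0 [qp|->]; first by rewrite qp.
case: ifPn => [_|qp]; first by rewrite mul0r.
by rewrite eqxx (_ : q = 0) ?mul0r //; apply/eqP; rewrite eq_le q0 andbT leNgt.
Qed.

Lemma fterm_ge_affine k c p q : (k%:E <= f_infty f)%E ->
  (forall y, c + k * y <= f y) -> 0 <= p -> 0 <= q ->
  ((c * q + k * p)%:E <= fterm f p q)%E.
Proof.
move=> kf cf p0 q0; rewrite /fterm; case: ifPn => qp.
  rewrite lee_fin; have := ler_wpM2l (ltW qp) (cf (p / q)).
  by have -> : q * (c + k * (p / q)) = c * q + k * p by field; rewrite gt_eqF.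
rewrite (_ : q = 0); last by apply/eqP; rewrite eq_le q0 andbT leNgt.
case: eqP => [->|_]; first by rewrite !mulr0 addr0.
by rewrite mulr0 add0r mulrC EFinM; exact: lee_wpmul2l.
Qed.

Lemma fterm_neqNy p q : 0 <= p -> fterm f p q != -oo%E.
Proof.
move=> p0; rewrite /fterm; case: ifP => // _; case: ifP => // /negbT pn0.
have pp : 0 < p by rewrite lt_neqAle eq_sym pn0 p0.
by have := f_infty_neqNy; case: (f_infty f) => [r| |] //= _; rewrite muleC gt0_mulye.
Qed.

Lemma sume_fterm_ge_perspective (T : eqType) (r : seq T) (P : pred T) (p q : T -> R) q0 :
  (forall i, 0 <= p i) -> (forall i, 0 <= q i) -> 0 <= q0 ->
  0 < \sum_(i <- r | P i) q i + q0 ->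
  ((perspective f (\sum_(i <- r | P i) p i) (\sum_(i <- r | P i) q i + q0))%:E <=
   \sum_(i <- r | P i) fterm f (p i) (q i) + (q0 * f 0)%:E)%E.
Proof.
move=> p0 q_ge0 q00; set Ps := \sum_(i <- r | P i) p i; set Q := _ + q0 => Q0.
have [k supp] := convex_support_line (Ps / Q).
pose c := f (Ps / Q) - k * (Ps / Q).
have minor y : c + k * y <= f y by have := supp y; rewrite /c; lra.
have kf : (k%:E <= f_infty f)%E.
  by apply: (@f_infty_ge_slope k c) => t _; have := minor t; lra.
apply: (@le_trans _ _ ((\sum_(i <- r | P i) (c * q i + k * p i)) + q0 * c)%:E).
  rewrite lee_fin big_split /= -!mulr_sumr /perspective -/Ps.
  have -> : c * \sum_(i <- r | P i) q i + k * Ps + q0 * c = c * Q + k * Ps.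
    by rewrite /Q; ring.
  by rewrite /c mulrBl -(mulrA k) divfK ?gt_eqF // subrK mulrC.
rewrite EFinD -sumEFin; apply: leeD.
  by apply: lee_sum => i _; exact: fterm_ge_affine.
by rewrite lee_fin ler_wpM2l //; have := minor 0; rewrite mulr0 addr0.
Qed.

End convex_real_function.

Lemma esum_mem_seq (R : realType) (T : choiceType) (Y : set T) (r : seq T)
    (h : T -> \bar R) : uniq r -> (forall z, z \in r -> Y z) ->
  (forall z, (0 <= h z)%E) ->
  \esum_(z in Y `&` [set z | z \in r]) h z = \sum_(z <- r) h z.
Proof.
move=> r_uniq rY h0.
have -> : Y `&` [set z | z \in r] = [set` r].
  by apply/seteqP; split => z /=; [case|split => //; exact: rY].
rewrite esum_fset; [by rewrite -fsbig_seq|exact: finite_seq|by move=> z _].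
Qed.

Lemma ge0_esumZl (R : realType) (T : choiceType) (Y : set T) (h : T -> R) k :
  0 <= k -> (forall z, 0 <= h z) ->
  \esum_(z in Y) (k * h z)%:E = (k%:E * \esum_(z in Y) (h z)%:E)%E.
Proof.
move=> k0 h0; rewrite /esum -ereal_supZl //; last first.
  by apply/set0P; exists 0%E, set0; [exact: fsets_set0|rewrite fsbig_set0].
have fsumZ A : \sum_(z \in A) (k * h z)%:E = (k%:E * \sum_(z \in A) (h z)%:E)%E.
  rewrite ge0_mule_fsumr; last by move=> z; rewrite lee_fin.
  by apply: eq_fsbigr => z _; rewrite EFinM.
congr ereal_sup; apply/seteqP; split => y /=.
  by move=> [A YA <-]; exists (\sum_(z \in A) (h z)%:E); [exists A|rewrite fsumZ].
by move=> [z [A YA <-] <-]; exists A; rewrite ?fsumZ.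
Qed.

Lemma sum_ge_mem_seq (R : numDomainType) (T : eqType) (r : seq T) (h : T -> R) z :
  (forall y, 0 <= h y) -> z \in r -> h z <= \sum_(y <- r) h y.
Proof. by move=> h0 zr; rewrite (big_rem z) //= lerDl sumr_ge0. Qed.

Lemma maxr0_subN (R : realDomainType) (r : R) : Num.max r 0 - Num.max (- r) 0 = r.
Proof.
by rewrite !maxEle; case: ifPn => h1; case: ifPn => h2; rewrite -?ltNge in h1 h2; lra.
Qed.

Lemma maxr0_pM (R : realDomainType) (k p : R) : 0 <= p ->
  Num.max (p * k) 0 = Num.max k 0 * p.
Proof.
move=> p0; rewrite !maxEle.
by case: ifPn => h1; case: ifPn => h2; rewrite -?ltNge in h1 h2; nra.
Qed.

Lemma maxe0_subN (R : realDomainType) (y : \bar R) : y != -oo%E ->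
  (maxe y 0 - maxe (- y) 0)%E = y.
Proof.
case: y => [r| |] //= _; first by rewrite -!EFin_max -EFinB maxr0_subN.
by rewrite (max_l (leey _)) (max_r (leNye _)) sube0.
Qed.

Lemma maxeN0_fin_num (R : realDomainType) (y : \bar R) : y != -oo%E ->
  maxe (- y)%E 0 \is a fin_num.
Proof.
by case: y => [q| |] //= _; rewrite maxEle ?leNye //; case: ifP.
Qed.

Lemma sume_maxe0_subN (R : realDomainType) (T : eqType) (r : seq T) (F : T -> \bar R) :
  (forall i, F i != -oo%E) ->
  (\sum_(i <- r) maxe (F i) 0 - \sum_(i <- r) maxe (- F i) 0)%E = \sum_(i <- r) F i.
Proof.
move=> FNy; elim: r => [|i r IH]; first by rewrite !big_nil sube0.
have fin_r : \sum_(j <- r) maxe (- F j)%E 0 \is a fin_num.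
  by apply/sum_fin_numP => j _ _; exact: maxeN0_fin_num.
by rewrite !big_cons fin_num_oppeD ?maxeN0_fin_num // addeACA maxe0_subN // IH.
Qed.

Definition convex_on (R : realType) (I : set R) (g : R -> R) : Prop :=
  forall p q t, I p -> I q -> 0 <= t <= 1 ->
    g (t * p + (1 - t) * q) <= t * g p + (1 - t) * g q.

Section convex_on_sublevel.
Variables (R : realType) (I : set R) (g : R -> R) (e : R).
Hypothesis g_convex : convex_on I g.

Lemma convex_on_sublevel p q r : I p -> I q -> p <= r <= q ->
  g p <= e -> g q <= e -> g r <= e.
Proof.
move=> Ip Iq /andP[pr rq] gp gq; have [pq|pq] := eqVneq p q.
  by rewrite (_ : r = q) //; apply/eqP; rewrite eq_le rq -pq.
have qp : 0 < q - p by rewrite subr_gt0 lt_neqAle pq (le_trans pr).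
pose t := (q - r) / (q - p).
have t01 : 0 <= t <= 1 by rewrite divr_ge0 ?ler_pdivrMr //=; lra.
have := g_convex Ip Iq t01; rewrite (_ : t * p + _ = r); last by rewrite /t; field; lra.
by move/le_trans; apply; case/andP: t01 => t0 t1; nra.
Qed.

(* The chord from p to a nearby r >= l bounds g l by e plus a multiple of
   r - l. *)
Lemma convex_on_sublevel_closed_right p l : I p -> p < l ->
  (forall d, 0 < d -> exists r, [/\ I r, l <= r, r < l + d & g r <= e]) ->
  g l <= e.
Proof.
move=> Ip pl approx; pose D := `|g p - e| + 1.
have D0 : 0 < D by rewrite ltr_pwDr.
have gpD : g p - e <= D by have := ler_norm (g p - e); rewrite /D; lra.
apply/ler_addgt0Pr => d d0.
have [|r [Ir lr rl gr]] := approx (d * (l - p) / D).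
  by rewrite !mulr_gt0 ?invr_gt0 //; lra.
have [<-|rl'] := eqVneq r l; first lra.
have rp : 0 < r - p by lra.
pose t := (r - l) / (r - p).
have t01 : 0 <= t <= 1 by rewrite divr_ge0 ?ler_pdivrMr //=; lra.
have tD : t * D <= d.
  rewrite -ler_pdivlMr // /t ler_pdivrMr // (le_trans (_ : _ <= d * (l - p) / D)) //.
    by rewrite ltW //; lra.
  by rewrite mulrAC ler_pM2l ?invr_gt0 //; nra.
have := g_convex Ip Ir t01; rewrite (_ : t * p + _ = l); last by rewrite /t; field; lra.
move/le_trans; apply; case/andP: t01 => t0 t1.
have : t * (g p - e) <= t * D by exact: ler_wpM2l.
nra.
Qed.

End convex_on_sublevel.

Lemma pmf_le1 (R : realType) (m : nat) (X : set 'rV[R]_m) (nu : 'rV[R]_m -> R) z :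
  is_pmf X nu -> nu z <= 1.
Proof.
case=> nu0 [nuX nu1]; have [Xz|nXz] := pselect (X z); last by rewrite nuX.
rewrite -lee_fin -nu1; apply: esum_ge; exists [set z]; last by rewrite fsbig_set1.
by split; [exact: finite_set1|move=> y /= ->].
Qed.

Section empirical_ball.
Variables (R : realType) (m N : nat) (X : set 'rV[R]_m).
Variables (xhat : 'I_N -> 'rV[R]_m) (w : 'I_N -> R) (x : 'rV[R]_m) (f : R -> R).
Hypotheses (X_xhat : forall j, X (xhat j)) (w_gt0 : forall j, 0 < w j).
Hypotheses (w_sum1 : \sum_(j < N) w j = 1) (X_x : X x).
Hypotheses (f_convex : convex_fun f) (f1 : f 1 = 0).

Local Notation nuhat := (empirical xhat w).

Definition atoms : seq 'rV[R]_m := undup (x :: [seq xhat j | j <- enum 'I_N]).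

Lemma atoms_uniq : uniq atoms.
Proof. exact: undup_uniq. Qed.

Lemma size_atoms : (size atoms <= N.+1)%N.
Proof. by rewrite (leq_trans (size_undup _)) //= size_map size_enum_ord. Qed.

Lemma atomsP z : reflect (z = x \/ exists j, z = xhat j) (z \in atoms).
Proof.
rewrite mem_undup in_cons; apply: (iffP orP) => [[/eqP ->|/mapP[j _ ->]]|].
- by left.
- by right; exists j.
- by case=> [->|[j ->]]; [left|right; rewrite map_f ?mem_enum].
Qed.

Lemma mem_atoms_x : x \in atoms.
Proof. by apply/atomsP; left. Qed.

Lemma atoms_sub_X z : z \in atoms -> X z.
Proof. by case/atomsP => [->|[j ->]]. Qed.

Lemma empirical_ge0 z : 0 <= nuhat z.
Proof. by rewrite sumr_ge0 // => j _; exact: ltW. Qed.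

Lemma empirical_supp z : nuhat z != 0 -> z \in atoms.
Proof.
apply: contraR => z_atoms; rewrite /empirical big1 // => j /eqP zj.
by case/negP: z_atoms; apply/atomsP; right; exists j.
Qed.

Lemma sum_atoms_empirical : \sum_(z <- atoms) nuhat z = 1.
Proof.
rewrite /empirical; under eq_bigr do rewrite big_mkcond /=.
rewrite exchange_big /= -w_sum1; apply: eq_bigr => j _.
rewrite -big_mkcond /=; under eq_bigl do rewrite eq_sym.
rewrite -big_filter filter_pred1_uniq ?big_seq1 //; first exact: atoms_uniq.
by apply/atomsP; right; exists j.
Qed.

Lemma empirical_le1 z : nuhat z <= 1.
Proof.
have [->|/empirical_supp z_atoms] := eqVneq (nuhat z) 0; first exact: ler01.
by rewrite -sum_atoms_empirical sum_ge_mem_seq //; exact: empirical_ge0.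
Qed.

Lemma sum_atoms_split (V : nmodType) (h : 'rV[R]_m -> V) :
  \sum_(z <- atoms) h z = h x + \sum_(z <- atoms | z != x) h z.
Proof. by rewrite (bigD1_seq x) //; [exact: mem_atoms_x|exact: atoms_uniq]. Qed.

Lemma sum_atoms_empirical_nx : \sum_(z <- atoms | z != x) nuhat z = 1 - nuhat x.
Proof. by have := sum_atoms_empirical; rewrite sum_atoms_split; lra. Qed.

Lemma pmf_esum_outside nu : is_pmf X nu ->
  \esum_(z in X `&` ~` [set z | z \in atoms]) (nu z)%:E =
  (1 - \sum_(z <- atoms) nu z)%:E.
Proof.
case=> nu0 [_]; rewrite (esumID [set z | z \in atoms]); last first.
  by move=> z _; rewrite lee_fin.
rewrite esum_mem_seq ?sumEFin //; [|exact: atoms_uniq|exact: atoms_sub_X].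
have : (0 <= \esum_(z in X `&` ~` [set z | z \in atoms]) (nu z)%:E)%E.
  by apply: esum_ge0 => z _; rewrite lee_fin.
case: (\esum_(z in _) _)%E => [r| |] // _.
by rewrite -EFinD => -[nu1]; congr (_%:E); lra.
Qed.

(* Outside the atoms nuhat vanishes, so there the integrand is nu z * f 0 and
   sums to f 0 times the mass that nu puts outside the atoms. *)
Lemma fdiv_atoms nu : is_pmf X nu ->
  fdiv X f nuhat nu = (\sum_(z <- atoms) fterm f (nuhat z) (nu z)
     + (f 0 * (1 - \sum_(z <- atoms) nu z))%:E)%E.
Proof.
move=> nu_pmf; have [nu0 _] := nu_pmf.
set O := X `&` ~` [set z | z \in atoms].
have fterm_O z : O z -> fterm f (nuhat z) (nu z) = (nu z * f 0)%:E.
  move=> [_ z_atoms]; have -> : nuhat z = 0.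
    by have [//|/empirical_supp/z_atoms] := eqVneq (nuhat z) 0.
  by rewrite fterm_perspective //; [rewrite /perspective mul0r|right].
have max0_ge0 (e : \bar R) : (0 <= maxe e 0)%E by rewrite le_max lexx orbT.
rewrite /fdiv !(esumID [set z | z \in atoms] X) //.
rewrite !esum_mem_seq //; try exact: atoms_uniq; try exact: atoms_sub_X.
have -> : \esum_(z in O) maxe (fterm f (nuhat z) (nu z)) 0 =
    \esum_(z in O) (Num.max (f 0) 0 * nu z)%:E.
  by apply: eq_esum => z Oz; rewrite fterm_O // -EFin_max maxr0_pM.
have -> : \esum_(z in O) maxe (- fterm f (nuhat z) (nu z))%E 0 =
    \esum_(z in O) (Num.max (- f 0) 0 * nu z)%:E.
  by apply: eq_esum => z Oz; rewrite fterm_O // -EFinN -EFin_max -mulrN maxr0_pM.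
rewrite !ge0_esumZl ?le_max ?lexx ?orbT // pmf_esum_outside // -!EFinM.
rewrite fin_num_oppeD // addeACA sume_maxe0_subN; last first.
  by move=> z; apply: fterm_neqNy => //; exact: empirical_ge0.
by rewrite -EFinB -mulrBl maxr0_subN.
Qed.

Definition mixture (l : R) (z : 'rV[R]_m) : R := l * nuhat z + (1 - l) * (z == x)%:R.

Definition mixdiv (l : R) : R :=
  \sum_(z <- atoms) perspective f (nuhat z) (mixture l z).

Lemma mixture_x l : mixture l x = l * nuhat x + (1 - l).
Proof. by rewrite /mixture eqxx mulr1. Qed.

Lemma mixture_nx l z : z != x -> mixture l z = l * nuhat z.
Proof. by move=> /negbTE zx; rewrite /mixture zx mulr0 addr0. Qed.

Lemma mixture_ge0 l z : 0 <= l <= 1 -> 0 <= mixture l z.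
Proof.
by move=> /andP[l0 l1]; rewrite addr_ge0 ?mulr_ge0 ?subr_ge0 ?empirical_ge0.
Qed.

Lemma mixture_gt0 l z : 0 < l <= 1 -> nuhat z != 0 -> 0 < mixture l z.
Proof.
move=> /andP[l0 l1] nz.
have nz_gt0 : 0 < nuhat z by rewrite lt_neqAle eq_sym nz empirical_ge0.
by rewrite ltr_pwDl ?mulr_gt0 // mulr_ge0 ?subr_ge0.
Qed.

Lemma mixture_out l z : z \notin atoms -> mixture l z = 0.
Proof.
move=> z_atoms; have zx : z != x by apply: contraNneq z_atoms => ->; exact: mem_atoms_x.
rewrite mixture_nx // (_ : nuhat z = 0) ?mulr0 //.
by apply/eqP; apply: contraNT z_atoms; exact: empirical_supp.
Qed.

Lemma sum_atoms_mixture l : \sum_(z <- atoms) mixture l z = 1.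
Proof.
rewrite sum_atoms_split mixture_x (eq_bigr (fun z => l * nuhat z)); last first.
  by move=> z zx; rewrite mixture_nx.
by rewrite -mulr_sumr sum_atoms_empirical_nx; ring.
Qed.

Lemma mixture_pmf l : 0 <= l <= 1 -> is_pmf X (mixture l).
Proof.
move=> l01; have mixture_ge0E z : (0 <= (mixture l z)%:E)%E.
  by rewrite lee_fin mixture_ge0.
split; first by move=> z; exact: mixture_ge0.
split.
  by move=> z nXz; apply: mixture_out; apply: contra_notN nXz; exact: atoms_sub_X.
rewrite (esumID [set z | z \in atoms]) //.
rewrite esum_mem_seq //; [|exact: atoms_uniq|exact: atoms_sub_X].
rewrite esum1 ?adde0 ?sumEFin ?sum_atoms_mixture //.
by move=> z [_ z_atoms]; rewrite mixture_out //; apply/negP.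
Qed.

Lemma fdiv_mixture l : 0 < l <= 1 -> fdiv X f nuhat (mixture l) = (mixdiv l)%:E.
Proof.
move=> l01; have l01' : 0 <= l <= 1 by case/andP: l01 => /ltW -> ->.
rewrite fdiv_atoms; last exact: mixture_pmf.
rewrite sum_atoms_mixture subrr mulr0 adde0 -sumEFin.
apply: eq_bigr => z _; apply: fterm_perspective; first exact: mixture_ge0.
by have [|nz] := eqVneq (nuhat z) 0; [right|left; exact: mixture_gt0].
Qed.

Lemma fdiv_mixture0 :
  fdiv X f nuhat (mixture 0) = ((f (nuhat x))%:E + (1 - nuhat x)%:E * f_infty f)%E.
Proof.
have l01 : 0 <= (0 : R) <= 1 by rewrite lexx ler01.
rewrite fdiv_atoms; last exact: mixture_pmf.
rewrite sum_atoms_mixture subrr mulr0 adde0 sum_atoms_split.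
congr (_ + _)%E; first by rewrite mixture_x mul0r add0r subr0 /fterm ltr01 divr1 mul1r.
rewrite -sum_atoms_empirical_nx -sumEFin ge0_sume_distrl; last first.
  by move=> z _; rewrite lee_fin empirical_ge0.
apply: eq_bigr => z zx; rewrite mixture_nx // mul0r /fterm ltxx.
by case: eqP => [->|//]; rewrite mul0e.
Qed.

Lemma mixdiv_convex : convex_on [set l | 0 < l <= 1] mixdiv.
Proof.
move=> p q t p01 q01 t01; rewrite /mixdiv !mulr_sumr -big_split /=.
apply: ler_sum => z _.
have -> : mixture (t * p + (1 - t) * q) z = t * mixture p z + (1 - t) * mixture q z.
  by rewrite /mixture; ring.
apply: perspective_convex => //.
by have [|nz] := eqVneq (nuhat z) 0; [left|right; split; exact: mixture_gt0].
Qed.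

Lemma mixdiv1 : mixdiv 1 = 0.
Proof.
rewrite /mixdiv big1_seq // => z _; rewrite /perspective.
have -> : mixture 1 z = nuhat z by rewrite /mixture subrr mul0r addr0 mul1r.
by have [->|nz] := eqVneq (nuhat z) 0; rewrite ?mul0r // divff // f1 mulr0.
Qed.

Lemma mixdiv_split l : mixdiv l =
  perspective f (nuhat x) (l * nuhat x + (1 - l)) + (1 - nuhat x) * perspective f 1 l.
Proof.
rewrite /mixdiv sum_atoms_split mixture_x; congr (_ + _).
rewrite -sum_atoms_empirical_nx mulr_suml; apply: eq_bigr => z zx.
by rewrite mixture_nx // perspective_scale.
Qed.

Lemma sum_atoms_pmf_le1 nu : is_pmf X nu -> \sum_(z <- atoms) nu z <= 1.
Proof.
move=> nu_pmf; have [nu0 _] := nu_pmf.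
have := @esum_ge0 _ _ (X `&` ~` [set z | z \in atoms]) (fun z => (nu z)%:E).
by rewrite pmf_esum_outside // lee_fin subr_ge0; apply=> z _; rewrite lee_fin.
Qed.

Lemma sum_fterm_mixture_nx l : 0 < l ->
  \sum_(z <- atoms | z != x) fterm f (nuhat z) (mixture l z) =
  (perspective f (1 - nuhat x) (l * (1 - nuhat x)))%:E.
Proof.
move=> l0; rewrite perspective_scale -sum_atoms_empirical_nx mulr_suml -sumEFin.
apply: eq_bigr => z zx; rewrite mixture_nx // fterm_perspective.
- by rewrite perspective_scale.
- by rewrite mulr_ge0 ?empirical_ge0 ?ltW.
- have [|nz] := eqVneq (nuhat z) 0; [by right|left].
  by rewrite mulr_gt0 // lt_neqAle eq_sym nz empirical_ge0.
Qed.

(* Jensen's inequality for the perspective of f, applied to the part off x. *)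
Lemma fdiv_mixture_le nu : is_pmf X nu -> nuhat x < 1 -> nuhat x <= nu x ->
  (fdiv X f nuhat (mixture ((1 - nu x) / (1 - nuhat x))) <= fdiv X f nuhat nu)%E.
Proof.
move=> nu_pmf nuhat_x1 nux_ge; have [nu0 _] := nu_pmf.
have nux1 : nu x <= 1 := pmf_le1 x nu_pmf.
have nuhat_x1' : 0 < 1 - nuhat x by lra.
set l := (1 - nu x) / (1 - nuhat x).
have el : l * (1 - nuhat x) = 1 - nu x by rewrite divfK ?gt_eqF.
have l01 : 0 <= l <= 1 by rewrite divr_ge0 ?ler_pdivrMr //=; lra.
rewrite fdiv_atoms; last exact: mixture_pmf.
rewrite (fdiv_atoms nu_pmf) sum_atoms_mixture subrr mulr0 adde0 !sum_atoms_split.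
rewrite mixture_x (_ : l * _ + _ = nu x); last by move: el; rewrite mulrBr mulr1; lra.
rewrite -addeA; apply: leeD2l.
set S := \sum_(z <- atoms | z != x) nu z.
have S_ge0 : 0 <= S by rewrite sumr_ge0.
have S_le : nu x + S <= 1 by rewrite -sum_atoms_split sum_atoms_pmf_le1.
have [nux_eq1|nux_lt1] := eqVneq (nu x) 1.
  have nu_nx0 z : z \in atoms -> z != x -> nu z = 0.
    move=> z_atoms zx; apply/eqP; rewrite eq_le nu0 andbT.
    have : nu z <= S by rewrite /S -big_filter sum_ge_mem_seq // mem_filter zx.
    lra.
  rewrite (_ : 1 - _ = 0) ?mulr0 ?adde0; last lra.
  rewrite big_seq_cond [leRHS]big_seq_cond le_eqVlt; apply/orP; left; apply/eqP.
  apply: eq_bigr => z /andP[z_atoms zx].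
  by rewrite mixture_nx // /l nux_eq1 subrr !mul0r nu_nx0.
have l0 : 0 < l by rewrite divr_gt0 // subr_gt0 lt_neqAle nux_lt1.
rewrite sum_fterm_mixture_nx // el mulrC.
have := @sume_fterm_ge_perspective _ _ f_convex _ atoms (fun z => z != x) nuhat nu
  (1 - (nu x + S)) empirical_ge0 nu0.
by rewrite sum_atoms_empirical_nx -/S (_ : S + _ = 1 - nu x); [apply; lra|ring].
Qed.

(* Letting l -> 0 in mixdiv l = perspective f (nuhat x) (1 - l (1 - nuhat x))
   + (1 - nuhat x) l f (1 / l) bounds the recession slope of f. *)
Lemma f_infty_le_mixdiv e :
  nuhat x < 1 -> (forall l, 0 < l <= 1 -> mixdiv l <= e) ->
  (f_infty f <= ((e - f (nuhat x)) / (1 - nuhat x))%:E)%E.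
Proof.
move=> nux1 mixdiv_le; set c := 1 - nuhat x; have c0 : 0 < c by rewrite subr_gt0.
set K := perspective f (nuhat x) 2 - f (nuhat x).
apply: (@f_infty_le_slope _ _ f_convex _ K 2) => t t2.
have t0 : 0 < t by lra.
set u := t^-1; have ut : u * t = 1 by rewrite mulVf ?gt_eqF.
have u0 : 0 < u by rewrite invr_gt0.
have u1 : u <= 1 by rewrite invf_le1 //; lra.
have b01 : 0 < u * nuhat x + (1 - u) <= 1.
  by rewrite -subr_gt0; have := empirical_ge0 x; have := empirical_le1 x; nra.
have := perspective_extrapolation f_convex (nuhat x) b01.
have := mixdiv_le u ltac:(by rewrite u0 u1).
rewrite mixdiv_split (_ : perspective f 1 u = u * f t); last first.
  by rewrite /perspective div1r invrK.
move=> mixdiv_u extrap.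
have key : c * (u * f t) <= e - f (nuhat x) + u * c * K.
  by rewrite /K; move: extrap mixdiv_u; rewrite /c; nra.
have {}key := ler_wpM2l (ltW t0) key.
rewrite -(ler_pM2l c0).
have -> : c * f t = t * (c * (u * f t)) by rewrite /u; field; rewrite gt_eqF.
have -> : c * ((e - f (nuhat x)) / c * t + K) = t * (e - f (nuhat x) + u * c * K).
  by rewrite /u; field; rewrite !gt_eqF.
exact: key.
Qed.

Lemma fdiv_mixture0_le e :
  nuhat x < 1 -> (forall l, 0 < l <= 1 -> mixdiv l <= e) ->
  (fdiv X f nuhat (mixture 0) <= e%:E)%E.
Proof.
move=> nux1 mixdiv_le; have c0 : (0 <= (1 - nuhat x)%:E)%E.
  by rewrite lee_fin subr_ge0 ltW.
have := lee_wpmul2l c0 (f_infty_le_mixdiv nux1 mixdiv_le).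
rewrite fdiv_mixture0 => /(leeD2l (f (nuhat x))%:E) /le_trans; apply.
by rewrite -EFinM -EFinD lee_fin mulrC divfK ?gt_eqF ?subr_gt0 //; lra.
Qed.

Variable eps : R.
Hypothesis eps_ge0 : 0 <= eps.

Local Notation ball := (fball X f nuhat eps).
Local Notation sup_x := (sup [set nu x | nu in ball]).

Lemma mixture1_in_ball : ball (mixture 1).
Proof.
have l01 : 0 < (1 : R) <= 1 by rewrite ltr01 lexx.
split; first by apply: mixture_pmf; rewrite ler01 lexx.
by rewrite fdiv_mixture // mixdiv1 lee_fin.
Qed.

Lemma mixture1_x : mixture 1 x = nuhat x.
Proof. by rewrite mixture_x mul1r subrr addr0. Qed.

Lemma ball_values_has_sup : has_sup [set nu x | nu in ball].
Proof.
split; first by exists (mixture 1 x), (mixture 1); first exact: mixture1_in_ball.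
by exists 1 => y [nu [nu_pmf _] <-]; exact: pmf_le1 x nu_pmf.
Qed.

Lemma empirical_le_sup : nuhat x <= sup_x.
Proof.
rewrite -mixture1_x; apply: sup_upper_bound; first exact: ball_values_has_sup.
by exists (mixture 1); first exact: mixture1_in_ball.
Qed.

Lemma sup_le1 : sup_x <= 1.
Proof.
apply: ge_sup; first by case: ball_values_has_sup.
by move=> y [nu [nu_pmf _] <-]; exact: pmf_le1 x nu_pmf.
Qed.

Section sup_mixture.
Hypothesis nux_lt1 : nuhat x < 1.

Local Notation c := (1 - nuhat x).
Local Notation l_sup := ((1 - sup_x) / c).

Lemma compl_empirical_x_gt0 : 0 < c.
Proof. by rewrite subr_gt0. Qed.

Lemma l_sup01 : 0 <= l_sup <= 1.
Proof.
have := empirical_le_sup; have := sup_le1; have := compl_empirical_x_gt0 => c0 *.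
by rewrite divr_ge0 ?ler_pdivrMr //=; lra.
Qed.

Lemma mixture_l_sup_x : mixture l_sup x = sup_x.
Proof. by rewrite mixture_x; field; rewrite gt_eqF // compl_empirical_x_gt0. Qed.

Lemma mixture_near_l_sup d : 0 < d -> exists l,
  [/\ 0 <= l <= 1, l_sup <= l, l < l_sup + d &
      (fdiv X f nuhat (mixture l) <= eps%:E)%E].
Proof.
move=> d0; have c0 := compl_empirical_x_gt0; have /andP[ls0 ls1] := l_sup01.
have [_ [nu [nu_pmf nu_div] <-] nu_near] :=
  sup_adherent (mulr_gt0 d0 c0) ball_values_has_sup.
have nu_le : nu x <= sup_x.
  by apply: sup_upper_bound; [exact: ball_values_has_sup|exists nu].
have l_sup_c : l_sup * c = 1 - sup_x by rewrite divfK ?gt_eqF.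
have [nux_lt|nux_ge] := ltP (nu x) (nuhat x).
  exists 1; split; rewrite ?ler01 ?lexx //; last by case: mixture1_in_ball.
  by rewrite -(ltr_pM2r c0) mulrDl l_sup_c mul1r; lra.
exists ((1 - nu x) / c); split.
- by rewrite divr_ge0 ?ler_pdivrMr //=; have := pmf_le1 x nu_pmf; lra.
- by rewrite ler_pM2r ?invr_gt0 //; lra.
- by rewrite -(ltr_pM2r c0) divfK ?gt_eqF // mulrDl l_sup_c; lra.
- exact: le_trans (fdiv_mixture_le nu_pmf nux_lt1 nux_ge) nu_div.
Qed.

Lemma mixture_l_sup_in_ball : ball (mixture l_sup).
Proof.
split; first exact/mixture_pmf/l_sup01.
have mixdiv_le l : 0 < l <= 1 ->
    (fdiv X f nuhat (mixture l) <= eps%:E)%E -> mixdiv l <= eps.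
  by move=> l01; rewrite fdiv_mixture // lee_fin.
have [ls0|ls_gt0] := eqVneq l_sup 0.
  rewrite ls0; have [//|not_in] := boolP (fdiv X f nuhat (mixture 0) <= eps%:E)%E.
  rewrite -(negbTE not_in); apply: fdiv_mixture0_le => // l' /andP[l'0 l'1].
  have [l [/andP[l0 l1] _ ll' l_in]] := mixture_near_l_sup l'0.
  have {}l0 : 0 < l.
    rewrite lt_neqAle l0 andbT; apply: contraNneq not_in => l_eq0.
    by move: l_in; rewrite -l_eq0.
  apply: (convex_on_sublevel mixdiv_convex (p := l) (q := 1));
    rewrite /= ?l0 ?ltr01 ?lexx //.
  - by rewrite ls0 add0r in ll'; rewrite ltW.
  - by apply: mixdiv_le => //; rewrite l0.
  - by rewrite mixdiv1.
have /andP[ls0 ls1] := l_sup01.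
have ls_pos : 0 < l_sup by rewrite lt_neqAle eq_sym ls_gt0.
rewrite fdiv_mixture ?ls_pos // lee_fin.
apply: (convex_on_sublevel_closed_right mixdiv_convex (p := l_sup / 2)); rewrite /=.
- by apply/andP; split; lra.
- lra.
move=> d d0; have [l [/andP[_ l1] lsl ld l_in]] := mixture_near_l_sup d0.
have l01 : 0 < l <= 1 by rewrite l1 andbT (lt_le_trans ls_pos).
by exists l; split => //; exact: mixdiv_le.
Qed.

End sup_mixture.

Lemma sup_attained_mixture : exists2 l, 0 <= l <= 1 &
  ball (mixture l) /\ sup_x = mixture l x.
Proof.
have [nux1|nux1] := eqVneq (nuhat x) 1.
  exists 1; first by rewrite ler01 lexx.
  split; first exact: mixture1_in_ball.
  by apply/eqP; rewrite mixture1_x eq_le empirical_le_sup andbT nux1 sup_le1.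
have nux_lt1 : nuhat x < 1 by rewrite lt_neqAle nux1 empirical_le1.
exists ((1 - sup_x) / (1 - nuhat x)); first exact: l_sup01.
by split; [exact: mixture_l_sup_in_ball|rewrite mixture_l_sup_x].
Qed.

End empirical_ball.

Theorem mainTheorem11 (R : realType) (m N : nat) (X : set 'rV[R]_m)
  (xhat : 'I_N -> 'rV[R]_m) (w : 'I_N -> R) (f : R -> R) (eps : R)
  (x : 'rV[R]_m) :
  countable X ->
  injective xhat ->
  (forall j, X (xhat j)) ->
  (forall j, 0 < w j) ->
  \sum_(j < N) w j = 1 ->
  convex_fun f ->
  f 1 = 0 ->
  0 <= eps ->
  X x ->
  exists nustar : 'rV[R]_m -> R,
    fball X f (empirical xhat w) eps nustar /\
    sup [set nu x | nu in fball X f (empirical xhat w) eps] = nustar x /\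
    (exists s : seq 'rV[R]_m,
        (size s <= N.+1)%N /\ [set z | nustar z != 0] `<=` [set z | z \in s]) /\
    [set z | nustar z != 0] `<=` (range xhat `|` [set x]).
Proof.
move=> _ _ X_xhat w_gt0 w_sum1 f_convex f1 eps_ge0 X_x.
have [l _ [l_ball sup_eq]] :=
  sup_attained_mixture X_xhat w_gt0 w_sum1 X_x f_convex f1 eps_ge0.
have supp z : mixture xhat w x l z != 0 -> z \in atoms xhat x.
  by apply: contraR => /mixture_out ->.
exists (mixture xhat w x l); split => //; split => //; split.
  by exists (atoms xhat x); split; [exact: size_atoms|move=> z /supp].
by move=> z /supp/atomsP[->|[j ->]]; [right|left; exists j].
Qed.
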